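(* If a graph $G$ is $M$-fat $n$-bottlenecked for some $M,n\in\mathbb N$, then the natural map $f:G\to G_{M,M}$ (for any root $x_0$) is a quasi-isometry.
   Context: All graphs are connected (and unbounded); multi-edges are allowed; $d$ is the graph metric on vertices. Sets $X,Y$ are $M$-disjoint if $d(x,y)>M$ for all $x\in X,y\in Y$; $X$ is $M$-connected if any two of its points are joined by a finite sequence in $X$ with consecutive distances $\le M$; $N_M(S)=\{y:d(s,y)<M\text{ for some }s\in S\}$. $G$ is $M$-fat $n$-bottlenecked if for any two connected $M$-disjoint subgraphs $X,Y\subset G$ there is $S\subset V(G)\setminus(V(X)\cup V(Y))$ with $|S|=n$ such that every path from a vertex of $X$ to a vertex of $Y$ meets $N_M(S)$. Skeleton $G_{\lambda,k}$ (root $x_0\in V(G)$, scale $\lambda\ge1$, connectivity $k\ge1$): layers $A_{N,\lambda}=\{x: N\lambda<d(x,x_0)\le(N+1)\lambda\}$, $N\in\mathbb Z$; blocks are the maximal $k$-connected subsets of layers; $G_{\lambda,k}$ has a vertex per block and an edge between two blocks iff an edge of $G$ joins a vertex of one to a vertex of the other. The natural map $f$ sends each vertex of $G$ to (the vertex corresponding to) its block. A map $f$ is a quasi-isometry if there are $a\ge1,b\ge0$ with $\frac1a d(x,y)-b\le d(f(x),f(y))\le a d(x,y)+b$ (and a quasi-isometric embedding in the other direction exists). *)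

From Stdlib Require Import Reals ZArith Arith List ClassicalEpsilon.
Import ListNotations.
Set Implicit Arguments.

Section Defs.
Variable T : Type.
Variable adj : T -> T -> Prop.

Inductive walk : T -> T -> nat -> Prop :=
| walk0 : forall x, walk x x 0
| walkS : forall x y z n, adj x y -> walk y z n -> walk x z (S n).

(* graph metric: the least length of a walk (meaningful for connected graphs) *)
Definition dist (x y : T) : nat :=
  epsilon (inhabits 0%nat)
    (fun n => walk x y n /\ forall m, walk x y m -> (n <= m)%nat).

Inductive chain : list T -> Prop :=
| chain1 : forall x, chain [x]
| chainS : forall x y l, adj x y -> chain (y :: l) -> chain (x :: y :: l).
End Defs.

Section Graph.
Variable V : Type.
Variable adj : V -> V -> Prop.
Local Notation d := (dist adj).

Definition symmetric_graph : Prop := forall x y, adj x y -> adj y x.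
Definition connected_graph : Prop := forall x y, exists n, walk adj x y n.
Definition unbounded_graph : Prop := forall m : nat, exists x y, (d x y > m)%nat.

Definition connected_set (X : V -> Prop) : Prop :=
  (exists x, X x) /\
  forall x y, X x -> X y ->
    exists n, walk (fun u v => adj u v /\ X u /\ X v) x y n.

Definition M_disjoint (M : nat) (X Y : V -> Prop) : Prop :=
  forall x y, X x -> Y y -> (d x y > M)%nat.

Definition nbhd (M : nat) (S : list V) (y : V) : Prop :=
  exists s, In s S /\ (d s y < M)%nat.

Definition path_from_to (X Y : V -> Prop) (p : list V) : Prop :=
  chain adj p /\ NoDup p /\
  exists x p', p = x :: p' /\ X x /\ Y (last p' x).

Definition fat_bottlenecked (M n : nat) : Prop :=
  forall X Y : V -> Prop,
    connected_set X -> connected_set Y -> M_disjoint M X Y ->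
    exists S : list V,
      length S = n /\ NoDup S /\
      (forall s, In s S -> ~ X s /\ ~ Y s) /\
      (forall p, path_from_to X Y p -> exists v, In v p /\ nbhd M S v).

Definition layer (x0 : V) (lam : nat) (N : Z) (x : V) : Prop :=
  (N * Z.of_nat lam < Z.of_nat (d x x0) <= (N + 1) * Z.of_nat lam)%Z.

Definition k_connected (k : nat) (B : V -> Prop) : Prop :=
  (exists x, B x) /\
  forall x y, B x -> B y ->
    exists l, chain (fun u v => (d u v <= k)%nat) (x :: l) /\
              (forall z, In z l -> B z) /\ last l x = y.

Definition is_block (x0 : V) (lam k : nat) (B : V -> Prop) : Prop :=
  exists N : Z,
    (forall x, B x -> layer x0 lam N x) /\ k_connected k B /\
    forall B' : V -> Prop,
      (forall x, B x -> B' x) -> (forall x, B' x -> layer x0 lam N x) ->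
      k_connected k B' -> forall x, B' x -> B x.

Definition skel_adj (x0 : V) (lam k : nat) (B B' : V -> Prop) : Prop :=
  is_block x0 lam k B /\ is_block x0 lam k B' /\
  exists u v, B u /\ B' v /\ adj u v.

Definition skel_dist (x0 : V) (lam k : nat) : (V -> Prop) -> (V -> Prop) -> nat :=
  dist (skel_adj x0 lam k).

Definition skel_quasi_isometry (x0 : V) (lam k : nat) (f : V -> (V -> Prop)) : Prop :=
  (exists a b : R, (1 <= a)%R /\ (0 <= b)%R /\
     forall x y,
       (/ a * INR (d x y) - b <= INR (skel_dist x0 lam k (f x) (f y)))%R /\
       (INR (skel_dist x0 lam k (f x) (f y)) <= a * INR (d x y) + b)%R) /\
  (exists (g : (V -> Prop) -> V) (a b : R), (1 <= a)%R /\ (0 <= b)%R /\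
     forall B B', is_block x0 lam k B -> is_block x0 lam k B' ->
       (/ a * INR (skel_dist x0 lam k B B') - b <= INR (d (g B) (g B')))%R /\
       (INR (d (g B) (g B')) <= a * INR (skel_dist x0 lam k B B') + b)%R).
End Graph.

(* Collapsing sets of uniformly bounded diameter, every vertex lying in one of
   them, is a quasi-isometry, so it suffices to bound the diameter of a block.
   A block at height h > 3M is an M-chain inside the band of heights
   (h - M, h + M).  Separate the connected set of points of height > h - 2M
   containing the chain from the ball of radius h - 3M - 1 about x0.  A geodesic
   descent from any chain point reaches that ball within 4M steps, so every chain
   point lies within 5M of the n-point bottleneck; among n + 1 chain points spaced
   11M + 1 apart along the chain, two would share a bottleneck point and hence be
   within 10M of each other, so the chain, and the block, is short. *)

From Pilot Require Import Defs.
From Stdlib Require Import Reals ZArith Arith List Lia Lra ClassicalEpsilon Classical.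
Import ListNotations.
Set Implicit Arguments.

Section Walks.
Variables (T : Type) (R : T -> T -> Prop).

Definition restrict (P : T -> Prop) (a b : T) : Prop := R a b /\ P a /\ P b.

Lemma walk_app x y z m n : walk R x y m -> walk R y z n -> walk R x z (m + n).
Proof. induction 1; simpl; intros; [assumption | eapply walkS; eauto]. Qed.

Lemma walk_snoc x y z n : walk R x y n -> R y z -> walk R x z (S n).
Proof.
  intros Wxy Ryz. rewrite <- Nat.add_1_r.
  apply walk_app with y; [assumption | eapply walkS; eauto using walk0].
Qed.

Lemma walk_rev : (forall a b, R a b -> R b a) -> forall x y n, walk R x y n -> walk R y x n.
Proof. intros Rsym x y n W; induction W; [constructor | eapply walk_snoc; eauto]. Qed.

Lemma walk_split m n : forall x z, walk R x z (m + n) ->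
  exists w, walk R x w m /\ walk R w z n.
Proof.
  induction m as [|m IH]; simpl; intros x z W.
  - exists x; split; [constructor | assumption].
  - inversion W as [|? y ? ? Rxy Wyz]; subst.
    destruct (IH _ _ Wyz) as [w [Wyw Wwz]].
    exists w; split; [eapply walkS; eauto | assumption].
Qed.

Lemma walk_mono (R' : T -> T -> Prop) x y n :
  (forall a b, R a b -> R' a b) -> walk R x y n -> walk R' x y n.
Proof. intros HR W; induction W; [constructor | eapply walkS; eauto]. Qed.

Lemma dist_spec x y : (exists n, walk R x y n) ->
  walk R x y (Defs.dist R x y) /\ forall m, walk R x y m -> Defs.dist R x y <= m.
Proof.
  intros [n Wn]. unfold Defs.dist. apply epsilon_spec.
  induction n as [n IH] using (well_founded_induction lt_wf).
  destruct (classic (exists k, k < n /\ walk R x y k)) as [[k [Hk Wk]] | Hmin].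
  - exact (IH k Hk Wk).
  - exists n; split; [assumption|]. intros m Wm.
    destruct (le_lt_dec n m); [assumption|]. exfalso; eauto.
Qed.

Lemma last_cons (a d : T) l : last (a :: l) d = last l a.
Proof.
  revert a d; induction l as [|b l IH]; intros a d; [reflexivity|].
  change (last (b :: l) d = last (b :: l) a). now rewrite !IH.
Qed.

Lemma last_app (l1 l2 : list T) d : l2 <> [] -> last (l1 ++ l2) d = last l2 d.
Proof.
  intros Hl2. revert d; induction l1 as [|a l1 IH]; intros d; [reflexivity|].
  rewrite <- app_comm_cons, last_cons, IH.
  destruct l2; [congruence | now rewrite !last_cons].
Qed.

Lemma chain_app_r (l1 l2 : list T) : l2 <> [] -> chain R (l1 ++ l2) -> chain R l2.
Proof.
  intros Hl2. induction l1 as [|a l1 IH]; simpl; intros Hc; [assumption|].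
  apply IH. inversion Hc; subst; [destruct l1, l2; simpl in *; congruence | assumption].
Qed.

Lemma chain_mono (R' : T -> T -> Prop) l :
  (forall a b, R a b -> R' a b) -> chain R l -> chain R' l.
Proof. intros HR Hc; induction Hc; constructor; auto. Qed.

Lemma chain_propagate (P : T -> Prop) x l : chain R (x :: l) -> P x ->
  (forall a b, In a (x :: l) -> R a b -> P a -> P b) ->
  forall z, In z (x :: l) -> P z.
Proof.
  revert x; induction l as [|y l IH]; intros x Hc Px Hstep z Hz.
  - destruct Hz as [<- | []]; assumption.
  - inversion Hc as [|? ? ? Rxy Hc']; subst.
    destruct Hz as [<- | Hz]; [assumption|].
    apply (IH y); auto.
    + apply (Hstep x); simpl; auto.
    + intros a b Ha. apply Hstep; simpl; auto.
Qed.

Lemma chain_ivt (g : T -> nat) (K t : nat) x l :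
  chain (fun a b => g b <= g a + K) (x :: l) -> g x <= t -> t <= g (last l x) ->
  exists z, In z (x :: l) /\ t <= g z <= t + K.
Proof.
  revert x; induction l as [|y l IH]; intros x Hc Hx Hlast.
  - exists x; split; [left; reflexivity | simpl in Hlast; lia].
  - inversion Hc as [|? ? ? Hxy Hc']; subst.
    destruct (le_lt_dec (g y) t).
    + rewrite last_cons in Hlast.
      destruct (IH y Hc' ltac:(assumption) Hlast) as [z [Hz Hgz]].
      exists z; split; [right|]; assumption.
    + exists y; split; [right; left; reflexivity | lia].
Qed.

Lemma path_of_walk (P : T -> Prop) x y n : walk (restrict P) x y n -> P x ->
  exists l, chain R (x :: l) /\ NoDup (x :: l) /\ last l x = y /\
            forall z, In z (x :: l) -> P z.
Proof.
  intros W; induction W as [x | x y z n [Rxy [_ Py]] W IH]; intros Px.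
  - exists []; repeat split; [constructor | constructor; [auto | constructor] |].
    intros z [<- | []]; assumption.
  - destruct (IH Py) as [l [Hc [Hnd [Hlast HP]]]].
    destruct (classic (In x (y :: l))) as [Hin | Hnin].
    + destruct (in_split _ _ Hin) as [l1 [l2 Hsplit]].
      rewrite Hsplit in Hc, Hnd, HP.
      exists l2; repeat split.
      * eapply chain_app_r; [congruence | eassumption].
      * eapply NoDup_app_remove_l; eassumption.
      * rewrite <- Hlast, <- (last_cons y x l), Hsplit, last_app, last_cons by congruence.
        reflexivity.
      * intros w Hw. apply HP, in_or_app. right; assumption.
    + exists (y :: l); repeat split.
      * constructor; assumption.
      * constructor; assumption.
      * rewrite last_cons; assumption.
      * intros w [<- | Hw]; auto.
Qed.
End Walks.

Lemma pigeonhole_indices (A : Type) (L : list A) (P : nat -> A -> Prop) :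
  (forall i, i <= length L -> exists s, In s L /\ P i s) ->
  exists i j s, i < j <= length L /\ P i s /\ P j s.
Proof.
  intros HP. destruct (HP 0 (Nat.le_0_l _)) as [s0 _].
  set (F i := epsilon (inhabits s0) (fun s => In s L /\ P i s)).
  assert (HF : forall i, i <= length L -> In (F i) L /\ P i (F i))
    by (intros i Hi; apply (epsilon_spec (inhabits s0)), HP, Hi).
  apply NNPP; intros Hno.
  assert (Hinj : NoDup (map F (seq 0 (S (length L))))).
  { apply NoDup_map_NoDup_ForallPairs; [|apply seq_NoDup].
    intros i j Hi Hj Hij. apply in_seq in Hi, Hj.
    destruct (Nat.lt_trichotomy i j) as [Hlt | [Heq | Hgt]]; [exfalso | assumption | exfalso];
      apply Hno.
    - exists i, j, (F i); repeat split; try lia; [apply HF; lia | rewrite Hij; apply HF; lia].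
    - exists j, i, (F j); repeat split; try lia; [apply HF; lia | rewrite <- Hij; apply HF; lia]. }
  apply NoDup_incl_length with (l' := L) in Hinj.
  - rewrite length_map, length_seq in Hinj. lia.
  - intros a Ha. apply in_map_iff in Ha as [i [<- Hi]]. apply in_seq in Hi. apply HF; lia.
Qed.

Section Metric.
Variables (V : Type) (adj : V -> V -> Prop).
Hypothesis Hsym : symmetric_graph adj.
Hypothesis Hconn : connected_graph adj.
Local Notation d := (Defs.dist adj).

Lemma d_walk x y : walk adj x y (d x y).
Proof. apply dist_spec, Hconn. Qed.

Lemma d_min x y m : walk adj x y m -> d x y <= m.
Proof. intros W. apply (dist_spec (ex_intro _ m W)), W. Qed.

Lemma d_refl x : d x x = 0.
Proof. pose proof (d_min (walk0 adj x)). lia. Qed.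

Lemma d_sym x y : d x y = d y x.
Proof.
  pose proof (d_min (walk_rev Hsym (d_walk x y))).
  pose proof (d_min (walk_rev Hsym (d_walk y x))). lia.
Qed.

Lemma d_tri x y z : d x z <= d x y + d y z.
Proof. apply d_min, walk_app with y; apply d_walk. Qed.

Lemma walk_in_ball x z L : walk adj x z L ->
  walk (restrict adj (fun a => d x a <= L)) x z L.
Proof.
  intros W; induction W as [x | x y z n Axy W IH]; [constructor|].
  assert (Hxy : d x y <= 1) by (apply d_min; eapply walkS; eauto using walk0).
  apply walkS with y; [split; [assumption|]; rewrite d_refl; lia|].
  eapply walk_mono; [|exact IH].
  intros a b [Aab [Ha Hb]]. pose proof (d_tri x y a). pose proof (d_tri x y b).
  repeat split; [assumption | lia | lia].
Qed.

Lemma exists_neighbor : unbounded_graph adj -> forall w, exists w', adj w w'.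
Proof.
  intros Hunb w. destruct (Hunb 0) as [a [b Hab]].
  assert (Hfar : exists z, 0 < d w z).
  { pose proof (d_tri a w b). rewrite (d_sym a w) in *.
    destruct (Nat.eq_dec (d w a) 0); [exists b | exists a]; lia. }
  destruct Hfar as [z Hz]. pose proof (d_walk w z) as W.
  destruct (d w z); [lia|]. inversion W; eauto.
Qed.

Definition component (Q : V -> Prop) (u w : V) : Prop :=
  Q w /\ exists m, walk (restrict adj Q) u w m.

Lemma walk_in_component Q u a b m : component Q u a ->
  walk (restrict adj Q) a b m -> walk (restrict adj (component Q u)) a b m.
Proof.
  intros Ha W; induction W as [a | a y b m [Aay [Qa Qy]] W IH]; [constructor|].
  assert (Hy : component Q u y).
  { destruct Ha as [_ [k Wk]]. split; [assumption|].
    exists (S k). eapply walk_snoc; [eassumption | repeat split; assumption]. }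
  apply walkS with y; [split; [|split]; assumption | auto].
Qed.

Lemma component_connected Q u : Q u -> connected_set adj (component Q u).
Proof.
  intros Qu. assert (Hu : component Q u u) by (split; [|exists 0; constructor]; assumption).
  split; [exists u; assumption|].
  intros x y Hx [_ [my Wy]]. pose proof Hx as [_ [mx Wx]]. exists (mx + my).
  apply walk_in_component; [assumption|].
  apply walk_app with u; [|assumption].
  apply walk_rev; [|assumption]. intros a b [Aab [Qa Qb]]. repeat split; auto.
Qed.

Lemma ball_in_component x0 r w : d w x0 <= r -> component (fun z => d z x0 <= r) x0 w.
Proof.
  intros Hw. split; [assumption|]. exists (d x0 w).
  eapply walk_mono; [|apply walk_in_ball, d_walk].
  intros a b [Aab [Ha Hb]].
  pose proof (d_sym a x0). pose proof (d_sym b x0). pose proof (d_sym w x0).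
  repeat split; [assumption | lia | lia].
Qed.

(* Consecutive chain points are joined by geodesics, which stay above height [t]. *)
Lemma chain_in_component x0 t k x l :
  chain (fun a b => d a b <= k) (x :: l) ->
  (forall z, In z (x :: l) -> t + k < d z x0) ->
  forall z, In z (x :: l) -> component (fun w => t < d w x0) x z.
Proof.
  intros Hc Hhigh. apply chain_propagate with (R := fun a b => d a b <= k); [assumption | |].
  - split; [specialize (Hhigh x (or_introl eq_refl)); lia | exists 0; constructor].
  - intros a b Ha Hab [Qa [m Wm]].
    assert (Hgeo : walk (restrict adj (fun w => t < d w x0)) a b (d a b)).
    { eapply walk_mono; [|apply walk_in_ball, d_walk].
      intros a' b' [A' [Ha' Hb']]. specialize (Hhigh a Ha).
      pose proof (d_tri a a' x0). pose proof (d_tri a b' x0).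
      repeat split; [assumption | lia | lia]. }
    assert (Qb : t < d b x0).
    { specialize (Hhigh a Ha). pose proof (d_tri a b x0). lia. }
    split; [assumption|]. exists (m + d a b). apply walk_app with a; assumption.
Qed.

Lemma descent_path x0 p r : r <= d p x0 ->
  exists l, chain adj (p :: l) /\ NoDup (p :: l) /\ d (last l p) x0 <= r /\
            forall z, In z (p :: l) -> d p z <= d p x0 - r.
Proof.
  intros Hr. set (K := d p x0 - r).
  assert (Wp : walk adj p x0 (K + r)) by (replace (K + r) with (d p x0) by lia; apply d_walk).
  destruct (walk_split _ _ Wp) as [w [Wpw Wwx]].
  destruct (path_of_walk (walk_in_ball Wpw)) as [l [Hc [Hnd [Hlast Hball]]]];
    [rewrite d_refl; lia|].
  exists l; repeat split; [assumption | assumption | | assumption].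
  rewrite Hlast. apply d_min, Wwx.
Qed.

(* The descent from [p] is a path from [X] to [Y], so it meets [N_m(S)]. *)
Lemma bottleneck_near x0 (X Y : V -> Prop) (S : list V) (m r : nat) p :
  (forall q, path_from_to adj X Y q -> exists v, In v q /\ nbhd adj m S v) ->
  (forall w, d w x0 <= r -> Y w) -> X p -> r <= d p x0 ->
  exists s, In s S /\ d s p < m + (d p x0 - r).
Proof.
  intros HS HY Xp Hr.
  destruct (descent_path x0 p Hr) as [l [Hc [Hnd [Hlast Hnear]]]].
  destruct (HS (p :: l)) as [v [Hv [s [Hs Hsv]]]].
  { repeat split; [assumption | assumption |]. exists p, l. auto. }
  exists s; split; [assumption|].
  pose proof (Hnear v Hv). pose proof (d_tri s v p). rewrite (d_sym v p) in *. lia.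
Qed.
End Metric.

Lemma layer_scale0 (V : Type) (adj : V -> V -> Prop) x0 N x : ~ layer adj x0 0 N x.
Proof. unfold layer. simpl. rewrite !Z.mul_0_r. lia. Qed.

Section Bottleneck.
Variables (V : Type) (adj : V -> V -> Prop).
Hypothesis Hsym : symmetric_graph adj.
Hypothesis Hconn : connected_graph adj.
Local Notation d := (Defs.dist adj).
Variables (M n : nat) (x0 : V).
Hypothesis HM : 0 < M.
Hypothesis Hfat : fat_bottlenecked adj M n.

Lemma layer_band N a b : layer adj x0 M N a -> layer adj x0 M N b -> d a x0 < d b x0 + M.
Proof. unfold layer. rewrite Z.mul_add_distr_r, Z.mul_1_l. lia. Qed.

Lemma band_chain_short u l :
  3 * M < d u x0 ->
  chain (fun a b => d a b <= M) (u :: l) ->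
  (forall z, In z (u :: l) -> d z x0 < d u x0 + M /\ d u x0 < d z x0 + M) ->
  d u (last l u) < n * (11 * M + 1) + M.
Proof.
  intros Hdeep Hc Hband. remember (d u x0) as h eqn:Hh. remember (h - 3 * M - 1) as r eqn:Hr.
  set (X := component adj (fun w => h - 2 * M < d w x0) u).
  set (Y := component adj (fun w => d w x0 <= r) x0).
  destruct (@Hfat X Y) as [Sep [HSlen [_ [_ HS]]]].
  - apply component_connected; [assumption | cbn beta; lia].
  - apply component_connected; [assumption | cbn beta; rewrite d_refl by assumption; lia].
  - intros a b [Ha _] [Hb _]. pose proof (d_tri Hconn a b x0). lia.
  - destruct (le_lt_dec (n * (11 * M + 1) + M) (d u (last l u))) as [Hfar | ]; [exfalso | assumption].
    assert (Hclose : forall i, i <= length Sep -> exists s, In s Sep /\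
              exists p, i * (11 * M + 1) <= d u p <= i * (11 * M + 1) + M /\ d s p < 5 * M).
    { intros i Hi. rewrite HSlen in Hi.
      destruct (@chain_ivt V (d u) M (i * (11 * M + 1)) u l) as [p [Hp Hup]].
      - eapply chain_mono; [|exact Hc]. intros a b Hab. cbn beta in *. pose proof (d_tri Hconn u a b). lia.
      - rewrite d_refl by assumption. lia.
      - pose proof (Nat.mul_le_mono_r _ _ (11 * M + 1) Hi). lia.
      - assert (Xp : X p).
        { apply chain_in_component with (k := M) (l := l); try assumption.
          intros z Hz. specialize (Hband z Hz). lia. }
        specialize (Hband p Hp).
        destruct (bottleneck_near Hsym Hconn x0 p HS
                    (fun w Hw => ball_in_component Hsym Hconn x0 w Hw) Xp) as [s [Hs Hsp]]; [lia|].
        exists s; split; [assumption|]. exists p; split; [assumption | lia]. }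
    destruct (pigeonhole_indices _ _ Hclose) as [i [j [s [Hij [[p [Hp Hsp]] [q [Hq Hsq]]]]]]].
    pose proof (d_tri Hconn p s q). rewrite (d_sym Hsym Hconn p s) in *.
    pose proof (d_tri Hconn u p q).
    assert (S i * (11 * M + 1) <= j * (11 * M + 1)) by (apply Nat.mul_le_mono_r; lia).
    simpl in *. lia.
Qed.

Lemma block_diam B : is_block adj x0 M M B ->
  forall u v, B u -> B v -> d u v <= n * (11 * M + 1) + 7 * M.
Proof.
  intros [N [Hlayer [[_ Hk] _]]] u v Hu Hv.
  assert (Hband : forall z, B z -> d z x0 < d u x0 + M /\ d u x0 < d z x0 + M)
    by (intros z Hz; split; eapply layer_band; eauto).
  destruct (le_lt_dec (d u x0) (3 * M)) as [Hlow | Hdeep].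
  - pose proof (d_tri Hconn u x0 v). rewrite (d_sym Hsym Hconn x0 v) in *.
    specialize (Hband v Hv). lia.
  - destruct (Hk u v Hu Hv) as [l [Hc [Hl Hlast]]]. rewrite <- Hlast.
    enough (d u (last l u) < n * (11 * M + 1) + M) by lia.
    apply band_chain_short; [assumption | assumption |].
    intros z [<- | Hz]; auto.
Qed.
End Bottleneck.

Section Skeleton.
Variables (V : Type) (adj : V -> V -> Prop).
Hypothesis Hsym : symmetric_graph adj.
Hypothesis Hconn : connected_graph adj.
Local Notation d := (Defs.dist adj).
Variables (x0 : V) (lam k : nat).
Local Notation block := (is_block adj x0 lam k).
Local Notation skel_walk := (walk (skel_adj adj x0 lam k)).
Variable f : V -> (V -> Prop).
Hypothesis Hf : forall x, block (f x) /\ f x x.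
Hypothesis Hnb : forall w, exists w', adj w w'.
Variable C : nat.
Hypothesis Hdiam : forall B, block B -> forall a b, B a -> B b -> d a b <= C.

Lemma skel_walk_of_walk m : forall a b, walk adj a b (S m) ->
  forall B B', block B -> B a -> block B' -> B' b -> skel_walk B B' (S m).
Proof.
  induction m as [|m IH]; intros a b W B B' HB Ha HB' Hb;
    inversion W as [|? y ? ? Aay Wyb]; subst.
  - inversion Wyb; subst. apply walkS with B'; [|constructor].
    split; [|split]; [assumption | assumption | exists a, b; auto].
  - destruct (Hf y) as [Hfy Hy]. apply walkS with (f y); [|exact (IH y b Wyb _ _ Hfy Hy HB' Hb)].
    split; [|split]; [assumption | assumption | exists a, y; auto].
Qed.

(* The detour [a -> w -> a] makes the walk nonempty, so that it starts at [B]. *)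
Lemma skel_walk_of_dist B B' a b : block B -> B a -> block B' -> B' b ->
  skel_walk B B' (d a b + 2).
Proof.
  intros HB Ha HB' Hb. destruct (Hnb a) as [w Aaw].
  rewrite Nat.add_comm. apply skel_walk_of_walk with a b; try assumption.
  change (S (S (d a b))) with (2 + d a b). apply walk_app with a; [|apply d_walk, Hconn].
  apply walkS with w; [assumption|]. apply walkS with a; [apply Hsym, Aaw | constructor].
Qed.

Lemma dist_le_skel_walk B B' m : block B -> skel_walk B B' m ->
  forall a b, B a -> B' b -> d a b <= (C + 1) * m + C.
Proof.
  intros HB W; induction W as [B | B B'' B' m [_ [HB'' [u [v [Hu [Hv Auv]]]]]] W IH];
    intros a b Ha Hb.
  - pose proof (Hdiam HB a b Ha Hb). lia.
  - specialize (IH HB'' v b Hv Hb). pose proof (Hdiam HB a u Ha Hu).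
    assert (d u v <= 1) by (apply d_min; apply walkS with v; [|constructor]; assumption).
    pose proof (d_tri Hconn a u b). pose proof (d_tri Hconn u v b). nia.
Qed.

Lemma skel_dist_bounds B B' a b : block B -> B a -> block B' -> B' b ->
  skel_dist adj x0 lam k B B' <= d a b + 2 /\
  d a b <= (C + 1) * skel_dist adj x0 lam k B B' + C.
Proof.
  intros HB Ha HB' Hb. pose proof (skel_walk_of_dist a b HB Ha HB' Hb) as W.
  destruct (dist_spec (ex_intro _ _ W)) as [Wmin Hmin]. split.
  - apply Hmin, W.
  - exact (dist_le_skel_walk HB Wmin a b Ha Hb).
Qed.
End Skeleton.

Lemma coarse_bounds_INR (c s D : nat) : s <= D + 2 -> D <= (c + 1) * s + c ->
  let a := INR (c + 2) in
  (/ a * INR D - a <= INR s <= a * INR D + a)%R /\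
  (/ a * INR s - a <= INR D <= a * INR s + a)%R.
Proof.
  intros Hs HD a. apply le_INR in Hs, HD. rewrite plus_INR in Hs.
  rewrite plus_INR, mult_INR, plus_INR in HD. simpl in Hs, HD.
  assert (Ha : a = (INR c + 2)%R) by (unfold a; rewrite plus_INR; reflexivity).
  pose proof (pos_INR c). pose proof (pos_INR s). pose proof (pos_INR D).
  assert (Hinv : (0 < / a <= 1)%R).
  { split; [apply Rinv_0_lt_compat; lra|]. rewrite <- Rinv_1. apply Rinv_le_contravar; lra. }
  assert (Hinva : (/ a * a = 1)%R) by (apply Rinv_l; lra).
  repeat split; nra.
Qed.

Theorem theorem1 (V : Type) (adj : V -> V -> Prop) (M n : nat) (x0 : V)
  (Hsym : symmetric_graph adj) (Hconn : connected_graph adj)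
  (Hunb : unbounded_graph adj)
  (Hfat : fat_bottlenecked adj M n)
  (f : V -> (V -> Prop))
  (Hf : forall x, is_block adj x0 M M (f x) /\ f x x) :
  skel_quasi_isometry adj x0 M M f.
Proof.
  assert (HM : 0 < M).
  { destruct M; [|lia]. destruct (Hf x0) as [[N [Hlayer _]] Hx0].
    destruct (layer_scale0 (Hlayer x0 Hx0)). }
  pose proof (exists_neighbor Hsym Hconn Hunb) as Hnb.
  pose proof (@block_diam V adj Hsym Hconn M n x0 HM Hfat) as Hdiam.
  set (C := n * (11 * M + 1) + 7 * M) in Hdiam.
  pose proof (skel_dist_bounds Hsym Hconn f Hf Hnb Hdiam) as Hbounds.
  assert (Hpick : forall B, is_block adj x0 M M B -> B (epsilon (inhabits x0) B)).
  { intros B [N [_ [[Hne _] _]]]. exact (epsilon_spec (inhabits x0) B Hne). }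
  assert (Ha : (1 <= INR (C + 2))%R) by (apply (le_INR 1); lia).
  split.
  - exists (INR (C + 2)), (INR (C + 2)). split; [lra | split; [lra |]].
    intros x y. destruct (Hf x) as [Hbx Hx], (Hf y) as [Hby Hy].
    destruct (Hbounds _ _ _ _ Hbx Hx Hby Hy) as [Hs HD].
    exact (proj1 (coarse_bounds_INR C Hs HD)).
  - exists (fun B => epsilon (inhabits x0) B), (INR (C + 2)), (INR (C + 2)).
    split; [lra | split; [lra |]]. intros B B' HB HB'.
    destruct (Hbounds _ _ _ _ HB (Hpick B HB) HB' (Hpick B' HB')) as [Hs HD].
    exact (proj2 (coarse_bounds_INR C Hs HD)).
Qed.
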